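(* Let $G$ be a simple graph on six vertices with degree sequence $d_1\leq d_2\leq\cdots\leq d_6$, where $d_1=d_2=2$ and $d_3\geq 3$. Then $G$ is Hamiltonian unless one of the following holds: (a) the two vertices of degree $2$ are nonadjacent and have the same pair of neighbors; or (b) $G$ is isomorphic to the graph $J$ obtained from a triangle and a complete graph $K_4$ by identifying one vertex of the triangle with one vertex of the $K_4$.
   Context: The degree sequence of a graph on $n$ vertices is the nondecreasing sequence $d_1\leq\cdots\leq d_n$ of its vertex degrees. A graph is Hamiltonian if it has a cycle through all of its vertices. *)

From mathcomp Require Import all_boot all_order.
Set Implicit Arguments. Unset Strict Implicit. Unset Printing Implicit Defensive.

Definition simple_graph (T : finType) (e : rel T) : Prop :=
  irreflexive e /\ symmetric e.

Definition nbhd (T : finType) (e : rel T) (x : T) : {set T} := [set y | e x y].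
Definition deg (T : finType) (e : rel T) (x : T) : nat := #|nbhd e x|.

Definition degree_seq (T : finType) (e : rel T) : seq nat :=
  sort leq [seq deg e x | x <- enum T].

Definition hamiltonian (T : finType) (e : rel T) : Prop :=
  exists s : seq T, [/\ uniq s, (forall x : T, x \in s) & cycle e s].

(* Graph J on 'I_6: triangle {0,1,2} and K4 on {2,3,4,5} sharing vertex 2. *)
Definition J_edge : rel 'I_6 :=
  fun i j => (i != j) && (((i <= 2) && (j <= 2)) || ((2 <= i) && (2 <= j)))%N.

Definition graph_iso (T T' : finType) (e : rel T) (e' : rel T') : Prop :=
  exists f : T -> T', bijective f /\ forall x y, e' (f x) (f y) = e x y.

From mathcomp Require Import all_boot all_order.

(* Relabelling the vertices by 'I_6 reduces the theorem to the 2^15 simple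
   graphs on 'I_6, each determined by the upper triangle of its adjacency
   matrix.  For every one of them that satisfies the degree hypothesis,
   evaluation finds among the 720 orderings of the vertices a Hamilton cycle
   or an isomorphism onto J, or else finds two nonadjacent vertices of
   degree 2 with the same neighbourhood. *)

Set Implicit Arguments. Unset Strict Implicit. Unset Printing Implicit Defensive.

Definition deg2_twins (T : finType) (e : rel T) : Prop :=
  exists u v : T, [/\ u != v, deg e u = 2, deg e v = 2, ~~ e u v
                    & nbhd e u = nbhd e v].

Lemma perm_sort_leq (s1 s2 : seq nat) : perm_eq s1 s2 -> sort leq s1 = sort leq s2.
Proof. by move/(perm_sortP leq_total leq_trans anti_leq). Qed.

Section Relabel.

Variables (T T' : finType) (f : T' -> T) (e : rel T) (e' : rel T').
Hypotheses (f_bij : bijective f) (e'E : forall x y, e' x y = e (f x) (f y)).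

Let f_inj : injective f := bij_inj f_bij.

Lemma simple_graph_relabel : simple_graph e -> simple_graph e'.
Proof.
by rewrite /simple_graph => -[irr sym]; split=> [x | x y]; rewrite !e'E ?irr // sym.
Qed.

Lemma nbhd_relabel x : nbhd e (f x) = f @: nbhd e' x.
Proof.
apply/setP=> y; case: f_bij => g fK gK.
by rewrite -(gK y) (mem_imset _ _ f_inj) !inE e'E.
Qed.

Lemma deg_relabel x : deg e' x = deg e (f x).
Proof. by rewrite /deg nbhd_relabel card_imset. Qed.

Lemma degree_seq_relabel : degree_seq e' = degree_seq e.
Proof.
rewrite /degree_seq (eq_map deg_relabel) map_comp; apply/perm_sort_leq/perm_map.
apply: uniq_perm; rewrite ?(map_inj_uniq f_inj) ?enum_uniq // => x.
by case: f_bij => g _ gK; rewrite -(gK x) map_f ?mem_enum.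
Qed.

Lemma deg2_twins_relabel : deg2_twins e' -> deg2_twins e.
Proof.
case=> u [v [neq_uv du dv nuv Nuv]]; exists (f u), (f v).
by rewrite (inj_eq f_inj) -!deg_relabel -e'E !nbhd_relabel Nuv.
Qed.

Lemma graph_iso_relabel (U : finType) (eU : rel U) :
  graph_iso e' eU -> graph_iso e eU.
Proof.
case=> h [h_bij hE]; case: f_bij => g fK gK.
exists (h \o g); split; first exact: bij_comp h_bij (Bijective gK fK).
by move=> x y /=; rewrite hE e'E !gK.
Qed.

Lemma hamiltonian_relabel : hamiltonian e' -> hamiltonian e.
Proof.
case=> s [uniq_s all_s cycle_s]; exists (map f s); split.
- by rewrite (map_inj_uniq f_inj).
- by case: f_bij => g _ gK x; rewrite -(gK x) map_f.
- by rewrite cycle_map -(eq_cycle e'E).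
Qed.

End Relabel.

(* A spelling of [enum 'I_n] that [vm_compute] can evaluate: [enum] goes
   through [insub], which is blocked on the opaque proof [idP]. *)
Fixpoint ord_list n : seq 'I_n :=
  match n return seq 'I_n with
  | 0 => [::]
  | n'.+1 => ord0 :: map (lift ord0) (ord_list n')
  end.

Lemma ord_listE n : ord_list n = enum 'I_n.
Proof.
apply: (inj_map val_inj); rewrite val_enum_ord.
elim: n => //= n IHn; rewrite -map_comp (eq_map (@lift0 n)) map_comp IHn.
by rewrite -(iotaDl 1 0).
Qed.

Section Decision.

Variables (T : finType) (vs : seq T).

Definition degree_seqb (e : rel T) : seq nat :=
  sort leq [seq count (e x) vs | x <- vs].

Definition deg2_twinsb (e : rel T) : bool :=
  has (fun u => has (fun v =>
    [&& u != v, count (e u) vs == 2, count (e v) vs == 2, ~~ e u v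
      & all (fun y => e u y == e v y) vs]) vs) vs.

Definition hamiltonianb (e : rel T) : bool := has (cycle e) (permutations vs).

End Decision.

Definition graph_isob n (vs : seq 'I_n) (e e' : rel 'I_n) : bool :=
  has (fun p : seq 'I_n => all (fun x : 'I_n => all (fun y : 'I_n =>
    e' (nth x p x) (nth y p y) == e x y) vs) vs) (permutations vs).

Section Reflection.

Variables (T : finType) (e : rel T).

Lemma deg_count x : deg e x = count (e x) (enum T).
Proof. by rewrite /deg /nbhd cardsE cardE enumT -size_filter. Qed.

Lemma degree_seqbE : degree_seq e = degree_seqb (enum T) e.
Proof. by rewrite /degree_seq (eq_map deg_count). Qed.

Lemma deg2_twinsP : reflect (deg2_twins e) (deg2_twinsb (enum T) e).
Proof.
apply: (iffP hasP) => [[u _ /hasP[v _]] | [u [v [neq_uv du dv nuv Nuv]]]].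
  case/and5P=> neq_uv du dv nuv /allP Nuv; exists u, v.
  rewrite !deg_count (eqP du) (eqP dv); split=> //.
  by apply/setP=> y; rewrite !inE; apply/eqP/Nuv; rewrite mem_enum.
exists u; rewrite ?mem_enum //; apply/hasP; exists v; rewrite ?mem_enum //.
rewrite neq_uv -!deg_count du dv nuv; apply/allP=> y _.
by have /setP/(_ y) := Nuv; rewrite !inE => ->.
Qed.

Lemma hamiltonianP : reflect (hamiltonian e) (hamiltonianb (enum T) e).
Proof.
apply: (iffP hasP) => [[s] | [s [uniq_s all_s cycle_s]]].
  rewrite mem_permutations => perm_s cycle_s; exists s; split=> //.
  - by rewrite (perm_uniq perm_s) enum_uniq.
  - by move=> x; rewrite (perm_mem perm_s) mem_enum.
exists s => //; rewrite mem_permutations uniq_perm ?enum_uniq // => x.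
by rewrite all_s mem_enum.
Qed.

End Reflection.

Lemma graph_isob_iso n (e e' : rel 'I_n) :
  graph_isob (enum 'I_n) e e' -> graph_iso e e'.
Proof.
case/hasP=> p; rewrite mem_permutations => perm_p /allP isoE.
have size_p : size p = n by rewrite (perm_size perm_p) size_enum_ord.
have uniq_p : uniq p by rewrite (perm_uniq perm_p) enum_uniq.
exists (fun x => nth x p x); split.
  apply: injF_bij => x y; rewrite [nth y p y](set_nth_default x) ?size_p //.
  by move/eqP; rewrite nth_uniq ?size_p // => /eqP/val_inj.
by move=> x y; apply/eqP/(allP (isoE x _)); rewrite mem_enum.
Qed.

Fixpoint bitseqs n : seq bitseq :=
  if n is n'.+1 then [seq b :: m | b <- [:: true; false], m <- bitseqs n']
  else [:: [::]].

Lemma mem_bitseqs m : m \in bitseqs (size m).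
Proof. by elim: m => [|b m IHm] //; apply: allpairs_f IHm; case: b. Qed.

Definition upper_rows n (e : rel 'I_n) : seq bitseq :=
  [seq [seq e i j | j <- drop i.+1 (enum 'I_n)] | i <- enum 'I_n].

Definition upper_shape n : seq nat := [seq n - i.+1 | i <- iota 0 n].

(* Row [i] of [R] lists the adjacency of [i] to [i + 1], ..., [n - 1]. *)
Definition graph_of_rows {n} (R : seq bitseq) : rel 'I_n :=
  fun i j => if i < j then nth false (nth [::] R i) (j - i.+1)
             else if j < i then nth false (nth [::] R j) (i - j.+1) else false.

Lemma shape_upper_rows n (e : rel 'I_n) : shape (upper_rows e) = upper_shape n.
Proof.
rewrite /shape /upper_shape -map_comp -val_enum_ord -map_comp.
by apply: eq_map => i /=; rewrite size_map size_drop size_enum_ord.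
Qed.

Lemma nth_upper_rows n (e : rel 'I_n) (i j : 'I_n) :
  i < j -> nth false (nth [::] (upper_rows e) i) (j - i.+1) = e i j.
Proof.
move=> lt_ij; rewrite (nth_map i) ?size_enum_ord // nth_ord_enum.
rewrite (nth_map j) ?size_drop ?size_enum_ord ?ltn_sub2r ?(leq_ltn_trans lt_ij) //.
by rewrite nth_drop subnKC // nth_ord_enum.
Qed.

Lemma graph_of_upper_rows n (e : rel 'I_n) :
  simple_graph e -> graph_of_rows (upper_rows e) =2 e.
Proof.
rewrite /simple_graph => -[irr sym] i j; rewrite /graph_of_rows.
case: ltngtP => [lt_ij | lt_ji | /val_inj->]; first exact: nth_upper_rows.
- by rewrite nth_upper_rows // sym.
- by rewrite irr.
Qed.

Definition degree_hypb (d : seq nat) : bool :=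
  [&& nth 0 d 0 == 2, nth 0 d 1 == 2 & 2 < nth 0 d 2].

(* Nested [if]s rather than [||]: [vm_compute] evaluates arguments eagerly,
   and the isomorphism search is by far the most expensive test. *)
Definition lemma4p3b (g : rel 'I_6) : bool :=
  let vs := ord_list 6 in
  if degree_hypb (degree_seqb vs g) then
    if hamiltonianb vs g then true else
    if deg2_twinsb vs g then true else graph_isob vs g J_edge
  else true.

Lemma lemma4p3b_sound (g : rel 'I_6) :
  lemma4p3b g ->
  nth 0 (degree_seq g) 0 = 2 -> nth 0 (degree_seq g) 1 = 2 ->
  3 <= nth 0 (degree_seq g) 2 ->
  [\/ hamiltonian g, deg2_twins g | graph_iso g J_edge].
Proof.
move=> + d0 d1 d2; rewrite /lemma4p3b ord_listE -degree_seqbE /degree_hypb d0 d1 d2.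
case: hamiltonianP => [? _ | _]; first exact: Or31.
case: deg2_twinsP => [? _ | _]; first exact: Or32.
by move/graph_isob_iso; apply: Or33.
Qed.

Lemma all_graphs6_lemma4p3b :
  all (fun m => lemma4p3b (graph_of_rows (reshape (upper_shape 6) m))) (bitseqs 15).
Proof. by vm_compute. Qed.

Lemma lemma4p3b_upper_rows (e : rel 'I_6) : lemma4p3b (graph_of_rows (upper_rows e)).
Proof.
have := mem_bitseqs (flatten (upper_rows e)).
rewrite size_flatten shape_upper_rows => /(allP all_graphs6_lemma4p3b).
by rewrite -(shape_upper_rows e) flattenK.
Qed.

Theorem lemma4p3 (T : finType) (e : rel T) :
  simple_graph e -> #|T| = 6 ->
  nth 0 (degree_seq e) 0 = 2 -> nth 0 (degree_seq e) 1 = 2 ->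
  3 <= nth 0 (degree_seq e) 2 ->
  ~ (exists u v : T, [/\ u != v, deg e u = 2, deg e v = 2, ~~ e u v
                       & nbhd e u = nbhd e v]) ->
  ~ graph_iso e J_edge ->
  hamiltonian e.
Proof.
move=> simple_e card_T d0 d1 d2 no_twins not_J.
pose f : 'I_6 -> T := enum_val \o cast_ord (esym card_T).
have f_bij : bijective f.
  apply: bij_comp; first exact: enum_val_bij.
  exact: Bijective (cast_ordKV card_T) (cast_ordK card_T).
pose g : rel 'I_6 := graph_of_rows (upper_rows (fun x y => e (f x) (f y))).
have gE x y : g x y = e (f x) (f y).
  by apply: graph_of_upper_rows; apply: simple_graph_relabel simple_e.
have := lemma4p3b_sound (lemma4p3b_upper_rows (fun x y => e (f x) (f y))).
rewrite -/g !(degree_seq_relabel f_bij gE) => /(_ d0 d1 d2) [ham | twins | iso].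
- exact: hamiltonian_relabel f_bij gE ham.
- by case: no_twins; exact: deg2_twins_relabel f_bij gE twins.
- by case: not_J; exact: (graph_iso_relabel f_bij gE iso).
Qed.
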